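(* Let $q>0$ be real and let $\mathfrak{M}^{\rm I}_q\subset\widetilde{SL}(2)_q$ and the involution $\dagger$ be as in the context. Let $U$ be a finite-dimensional Hermitian vector space with inner product $(\cdot,\cdot)$, conjugate linear in the first argument, and define the pairing $(\cdot,\cdot):(U\otimes\mathfrak{M}^{\rm I}_q)\times(U\otimes\mathfrak{M}^{\rm I}_q)\to\mathfrak{M}^{\rm I}_q$ by $(v_1\otimes f_1,v_2\otimes f_2)=(v_1,v_2)\,f_1^\dagger f_2$, extended additively. Then for $\sigma\in U\otimes\mathfrak{M}^{\rm I}_q$ we have $(\sigma,\sigma)=0$ if and only if $\sigma=0$.
   Context: $SL(2)_q$ is the unital associative $\mathbb{C}$-algebra generated by $g_{11'},g_{12'},g_{21'},g_{22'}$ with relations $g_{11'}g_{12'}=q^{-1}g_{12'}g_{11'}$, $g_{11'}g_{21'}=q^{-1}g_{21'}g_{11'}$, $g_{12'}g_{22'}=q^{-1}g_{22'}g_{12'}$, $g_{21'}g_{22'}=q^{-1}g_{22'}g_{21'}$, $g_{12'}g_{21'}=g_{21'}g_{12'}$, and $g_{11'}g_{22'}-q^{-1}g_{12'}g_{21'}=g_{22'}g_{11'}-qg_{21'}g_{12'}=1$. The algebra $\widetilde{SL}(2)_q$ is obtained by adjoining an invertible generator $\delta$ with $\delta g_{11'}=g_{11'}\delta$, $\delta g_{12'}=qg_{12'}\delta$, $\delta g_{21'}=q^{-1}g_{21'}\delta$, $\delta g_{22'}=g_{22'}\delta$. The involution $\dagger$ is the conjugate-linear anti-automorphism of $\widetilde{SL}(2)_q$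 with $g_{11'}^\dagger=g_{22'}$, $g_{12'}^\dagger=-g_{21'}$, $g_{21'}^\dagger=-g_{12'}$, $g_{22'}^\dagger=g_{11'}$, $\delta^\dagger=\delta$. Set $x_{11'}=\delta g_{11'}$, $x_{12'}=q^{-1/2}\delta g_{12'}$, $x_{21'}=q^{1/2}\delta g_{21'}$, $x_{22'}=\delta g_{22'}$, and let $\mathfrak{M}^{\rm I}_q$ be the subalgebra generated by these four elements (the quantum affine Minkowski space). It satisfies $x_{11'}x_{12'}=x_{12'}x_{11'}$, $x_{21'}x_{22'}=x_{22'}x_{21'}$, $[x_{11'},x_{22'}]+[x_{21'},x_{12'}]=0$, $x_{11'}x_{21'}=q^{-2}x_{21'}x_{11'}$, $x_{12'}x_{22'}=q^{-2}x_{22'}x_{12'}$, $x_{21'}x_{12'}=q^2x_{12'}x_{21'}$, and is preserved by $\dagger$: $x_{11'}^\dagger=x_{22'}$, $x_{12'}^\dagger=-x_{21'}$, $x_{21'}^\dagger=-x_{12'}$, $x_{22'}^\dagger=x_{11'}$. *)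

From HB Require Import structures.
From mathcomp Require Import all_boot all_order all_algebra.
From mathcomp Require Import reals complex.
Set Implicit Arguments. Unset Strict Implicit. Unset Printing Implicit Defensive.
Import Order.TTheory GRing.Theory Num.Theory.
Local Open Scope ring_scope.
Local Open Scope complex_scope.

Inductive gen := G11 | G12 | G21 | G22 | Dl | Dli.

Definition gen_to_nat (g : gen) : nat :=
  match g with G11 => 0 | G12 => 1 | G21 => 2 | G22 => 3 | Dl => 4 | Dli => 5 end.
Definition nat_to_gen (n : nat) : gen :=
  match n with 0 => G11 | 1 => G12 | 2 => G21 | 3 => G22 | 4 => Dl | _ => Dli end.
Lemma gen_natK : cancel gen_to_nat nat_to_gen. Proof. by case. Qed.
HB.instance Definition _ := Equality.copy gen (can_type gen_natK).

Section FreeAlgebra.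
Variable R : realType.
Local Notation C := (R[i]).

(* Elements of the free associative C-algebra on [gen], represented by
   formal finite linear combinations of words (lists of (coefficient, word)). *)
Definition fpoly := seq (C * seq gen).

Definition coef (p : fpoly) (w : seq gen) : C :=
  \sum_(t <- p) (if t.2 == w then t.1 else 0).

Definition addp (p r : fpoly) : fpoly := p ++ r.
Definition scalep (c : C) (p : fpoly) : fpoly := [seq (c * t.1, t.2) | t <- p].
Definition subp (p r : fpoly) : fpoly := p ++ scalep (-1) r.
Definition mulp (p r : fpoly) : fpoly :=
  [seq (a.1 * b.1, a.2 ++ b.2) | a <- p, b <- r].
Definition onep : fpoly := [:: (1, [::])].
Definition genp (g : gen) : fpoly := [:: (1, [:: g])].
Definition prodp (s : seq fpoly) : fpoly := foldr mulp onep s.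

(* defining relations of SL~(2)_q, each written as  lhs - rhs *)
Definition rels (q : R) : seq fpoly :=
  let qC : C := q%:C in
  let m a b := mulp (genp a) (genp b) in
  [:: subp (m G11 G12) (scalep qC^-1 (m G12 G11));
      subp (m G11 G21) (scalep qC^-1 (m G21 G11));
      subp (m G12 G22) (scalep qC^-1 (m G22 G12));
      subp (m G21 G22) (scalep qC^-1 (m G22 G21));
      subp (m G12 G21) (m G21 G12);
      subp (subp (m G11 G22) (scalep qC^-1 (m G12 G21))) onep;
      subp (subp (m G22 G11) (scalep qC (m G21 G12))) onep;
      subp (m Dl G11) (m G11 Dl);
      subp (m Dl G12) (scalep qC (m G12 Dl));
      subp (m Dl G21) (scalep qC^-1 (m G21 Dl));
      subp (m Dl G22) (m G22 Dl);
      subp (m Dl Dli) onep;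
      subp (m Dli Dl) onep ].

Definition in_rel_ideal (q : R) (p : fpoly) : Prop :=
  exists s : seq (fpoly * nat * fpoly),
    forall w, coef p w =
      coef (flatten [seq mulp (mulp t.1.1 (nth [::] (rels q) t.1.2)) t.2 | t <- s]) w.

(* equality in the quotient algebra SL~(2)_q *)
Definition aeq (q : R) (p r : fpoly) : Prop := in_rel_ideal q (subp p r).

(* the involution dagger: conjugate-linear anti-automorphism determined by
   g11^+ = g22, g12^+ = -g21, g21^+ = -g12, g22^+ = g11, delta^+ = delta
   (hence (delta^{-1})^+ = delta^{-1}) *)
Definition gdag (g : gen) : gen :=
  match g with G11 => G22 | G12 => G21 | G21 => G12 | G22 => G11 | Dl => Dl | Dli => Dli end.
Definition gsign (g : gen) : bool :=
  match g with G12 | G21 => true | _ => false end.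
Definition dagger (p : fpoly) : fpoly :=
  [seq ((-1) ^+ count gsign t.2 * (t.1)^*, rev (map gdag t.2)) | t <- p].

(* generators x_{11'}, x_{12'}, x_{21'}, x_{22'} of the quantum affine Minkowski space,
   indexed by 'I_4 in the order 11', 12', 21', 22' *)
Definition xgen (q : R) (k : 'I_4) : fpoly :=
  let s : C := (Num.sqrt q)%:C in
  match val k with
  | 0 => mulp (genp Dl) (genp G11)
  | 1 => scalep s^-1 (mulp (genp Dl) (genp G12))
  | 2 => scalep s (mulp (genp Dl) (genp G21))
  | _ => mulp (genp Dl) (genp G22)
  end.

(* noncommutative polynomials in x_{11'},...,x_{22'}; every element of M^I_q is
   (the class of) [xembed q p] for some such p *)
Definition xpoly := seq (C * seq 'I_4).
Definition xembed (q : R) (p : xpoly) : fpoly :=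
  flatten [seq scalep t.1 (prodp (map (xgen q) t.2)) | t <- p].

Definition hermitian_inner_product (U : lmodType C) (form : U -> U -> C) : Prop :=
  [/\ forall a u v w, form (a *: u + v) w = a^* * form u w + form v w,
      forall a u v w, form u (a *: v + w) = a * form u v + form u w,
      forall u v, form v u = (form u v)^*
    & forall u, u != 0 -> 0 < form u u].

(* sigma = sum_k u_k (x) f_k in U (x) M^I_q, given as the list of pairs (u_k, f_k) *)
Definition tpair (q : R) (U : lmodType C) (form : U -> U -> C)
    (sigma : seq (U * xpoly)) : fpoly :=
  flatten [seq mulp (scalep (form a.1 b.1) (dagger (xembed q a.2))) (xembed q b.2)
          | a <- sigma, b <- sigma].

(* sigma = 0 in U (x) M^I_q : all contractions with linear functionals on U vanish *)
Definition tensor_zero (q : R) (U : lmodType C) (sigma : seq (U * xpoly)) : Prop :=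
  forall phi : {linear U -> C^o},
    aeq q (flatten [seq scalep (phi t.1) (xembed q t.2) | t <- sigma]) [::].

End FreeAlgebra.

From HB Require Import structures.
From mathcomp Require Import all_boot all_order all_algebra.
From mathcomp Require Import reals complex.
From mathcomp Require Import ring zify.
From Stdlib Require Import FunctionalExtensionality.
Import Order.TTheory GRing.Theory Num.Theory.
Set Implicit Arguments. Unset Strict Implicit. Unset Printing Implicit Defensive.
Local Open Scope ring_scope.
Local Open Scope complex_scope.

(* If sigma is zero, then (sigma, sigma) is zero, being a sum of left multiples
   f^dagger * (contraction of sigma with (u, -)).
   Conversely, the commutation relations of M^I_q rewrite sigma as sum_w u_w (x) x^w over
   ordered monomials x^w = x11'^a x12'^b x21'^c x22'^d.  SL~(2)_q acts on functions on Z^4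
   (delta by a shift, the g's by q-twisted shifts), and (x^w)^dagger x^w' sends the delta
   function at the origin to a function supported on a ray {(m1, m2, m3 + r, m4 + r)}
   whose apex is determined by the letter counts of w and w', with a value of sign
   (-1)^(#x12' + #x21') at the apex when w = w'.  Evaluate (sigma, sigma) at (2N, 0, t, t),
   where N is the largest length of a word with u_w <> 0 and t the smallest number of
   letters x12', x21' among those of length N: only the terms (u_w, u_w) of these extremal
   words survive, all of sign (-1)^t, so (sigma, sigma) = 0 forces every u_w to vanish. *)

Lemma big_group_snd (V Z : zmodType) (W : eqType) (Q : seq (V * W)) (S : seq W)
    (F : V -> W -> Z) :
  (forall w, {morph F^~ w : x y / x + y}) -> (forall w, F 0 w = 0) ->
  uniq S -> {subset map snd Q <= S} ->
  \sum_(x <- Q) F x.1 x.2 = \sum_(w <- S) F (\sum_(x <- Q | x.2 == w) x.1) w.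
Proof.
move=> FD F0 uS QS.
transitivity (\sum_(w <- S) \sum_(x <- Q) (if x.2 == w then F x.1 w else 0)); last first.
  by apply: eq_bigr => w _; rewrite (big_morph (F^~ w) (FD w) (F0 w)) [RHS]big_mkcond.
rewrite exchange_big /= [LHS]big_seq [RHS]big_seq; apply: eq_bigr => x xQ.
rewrite (bigD1_seq x.2) ?QS ?map_f //= eqxx big1 ?addr0 // => w /negbTE nw.
by rewrite eq_sym nw.
Qed.

Section FreeAlgebra.
Variable R : realType.
Local Notation C := (R[i]).
Implicit Types (p r s : fpoly R) (w : seq gen).

Definition ceq p r := forall w, coef p w = coef r w.

Lemma coef_filter p w : coef p w = \sum_(t <- p | t.2 == w) t.1.
Proof. by rewrite big_mkcond. Qed.

Lemma coef_nil w : coef [::] w = 0 :> C.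
Proof. by rewrite /coef big_nil. Qed.

Lemma coef_cat p r w : coef (p ++ r) w = coef p w + coef r w.
Proof. by rewrite /coef big_cat. Qed.

Lemma coef_scale c p w : coef (scalep c p) w = c * coef p w.
Proof.
rewrite /coef big_map mulr_sumr; apply: eq_bigr => t _ /=.
by case: ifP; rewrite ?mulr0.
Qed.

Lemma coef_sub p r w : coef (subp p r) w = coef p w - coef r w.
Proof. by rewrite coef_cat coef_scale mulN1r. Qed.

Lemma coef_flatten (l : seq (fpoly R)) w : coef (flatten l) w = \sum_(p <- l) coef p w.
Proof. by rewrite /coef big_flatten. Qed.

Lemma coef_mul p r w :
  coef (mulp p r) w = \sum_(a <- p) \sum_(b <- r) (if a.2 ++ b.2 == w then a.1 * b.1 else 0).
Proof. by rewrite /coef big_allpairs_dep. Qed.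

Lemma sum_ceq (V : zmodType) p p' (F : C -> seq gen -> V) :
  (forall w, {morph F^~ w : x y / x + y}) -> (forall w, F 0 w = 0) ->
  ceq p p' -> \sum_(a <- p) F a.1 a.2 = \sum_(a <- p') F a.1 a.2.
Proof.
move=> FD F0 e; have uS := undup_uniq (map snd (p ++ p')).
have sub p0 : {subset map snd p0 <= map snd p0} by [].
rewrite !(big_group_snd FD F0 uS) => [|w|w]; last 2 first.
- by rewrite mem_undup map_cat mem_cat => ->; rewrite orbT.
- by rewrite mem_undup map_cat mem_cat => ->.
by apply: eq_bigr => w _; rewrite -!coef_filter e.
Qed.

Lemma ceq_sym p r : ceq p r -> ceq r p.
Proof. by move=> e w; rewrite e. Qed.

Lemma ceq_trans p r s : ceq p r -> ceq r s -> ceq p s.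
Proof. by move=> e1 e2 w; rewrite e1 e2. Qed.

Lemma ceq_mul p p' r r' : ceq p p' -> ceq r r' -> ceq (mulp p r) (mulp p' r').
Proof.
move=> e1 e2 w; rewrite !coef_mul.
pose Fl c u := \sum_(b <- r) (if u ++ b.2 == w then c * b.1 else 0).
pose Fr c u := \sum_(a <- p') (if a.2 ++ u == w then a.1 * c else 0).
transitivity (\sum_(a <- p') Fl a.1 a.2).
  apply: (sum_ceq (F := Fl)) e1 => [u x y|u]; rewrite /Fl.
    by rewrite -big_split /=; apply: eq_bigr => b _; case: ifP; rewrite ?mulrDl ?addr0.
  by apply: big1 => b _; case: ifP; rewrite ?mul0r.
rewrite /Fl exchange_big [RHS]exchange_big /=.
apply: (sum_ceq (F := Fr)) e2 => [u x y|u]; rewrite /Fr.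
  by rewrite -big_split /=; apply: eq_bigr => a _; case: ifP; rewrite ?mulrDr ?addr0.
by apply: big1 => a _; case: ifP; rewrite ?mulr0.
Qed.

Lemma ceq_mulA p r s : ceq (mulp (mulp p r) s) (mulp p (mulp r s)).
Proof.
move=> w; rewrite coef_mul /mulp big_allpairs_dep /= coef_mul.
apply: eq_bigr => a _; rewrite big_allpairs_dep /= [RHS]exchange_big exchange_big /=.
by apply: eq_bigr => b _; apply: eq_bigr => c _; rewrite catA mulrA.
Qed.

Lemma ceq_mul_flattenr p l : ceq (mulp p (flatten l)) (flatten (map (mulp p) l)).
Proof.
move=> w; rewrite coef_flatten big_map coef_mul exchange_big big_flatten /=.
by apply: eq_bigr => r _; rewrite coef_mul exchange_big.
Qed.

Lemma ceq_mul_flattenl p l :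
  ceq (mulp (flatten l) p) (flatten (map (fun x => mulp x p) l)).
Proof.
move=> w; rewrite coef_flatten big_map coef_mul big_flatten /=.
by apply: eq_bigr => r _; rewrite coef_mul.
Qed.

Lemma ceq_mul_scalel c p r : ceq (mulp (scalep c p) r) (scalep c (mulp p r)).
Proof.
move=> w; rewrite coef_scale !coef_mul big_map mulr_sumr.
apply: eq_bigr => a _; rewrite mulr_sumr; apply: eq_bigr => b _ /=.
by case: ifP; rewrite ?mulr0 ?mulrA.
Qed.

Lemma ceq_mul_scaler c p r : ceq (mulp p (scalep c r)) (scalep c (mulp p r)).
Proof.
move=> w; rewrite coef_scale !coef_mul mulr_sumr.
apply: eq_bigr => a _; rewrite big_map mulr_sumr; apply: eq_bigr => b _ /=.
by case: ifP; rewrite ?mulr0 // mulrCA.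
Qed.

Lemma ceq_mul_catl p p' r : ceq (mulp (p ++ p') r) (mulp p r ++ mulp p' r).
Proof. by move=> w; rewrite coef_cat !coef_mul big_cat. Qed.

Lemma ceq_mul_catr p r r' : ceq (mulp p (r ++ r')) (mulp p r ++ mulp p r').
Proof.
by move=> w; rewrite coef_cat !coef_mul -big_split; apply: eq_bigr => a _; rewrite big_cat.
Qed.

Lemma ceq_mul1p p : ceq (mulp (onep R) p) p.
Proof.
move=> w; rewrite coef_mul big_seq1 /coef.
by apply: eq_bigr => b _ /=; rewrite mul1r.
Qed.

Lemma ceq_mulp1 p : ceq (mulp p (onep R)) p.
Proof.
move=> w; rewrite coef_mul /coef; apply: eq_bigr => b _ /=.
by rewrite big_seq1 cats0 mulr1.
Qed.

End FreeAlgebra.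

Section RelationIdeal.
Variable R : realType.
Variable q : R.
Implicit Types (p r s a : fpoly R).

Local Notation inI := (in_rel_ideal q).

Lemma ideal_ceq p r : ceq p r -> inI r -> inI p.
Proof. by move=> e [s hs]; exists s => w; rewrite e hs. Qed.

Lemma ideal0 p : (forall w, coef p w = 0) -> inI p.
Proof. by move=> h; exists [::] => w; rewrite h coef_nil. Qed.

Lemma ideal_cat p r : inI p -> inI r -> inI (p ++ r).
Proof.
move=> [s1 h1] [s2 h2]; exists (s1 ++ s2) => w.
by rewrite coef_cat h1 h2 map_cat flatten_cat coef_cat.
Qed.

Lemma ideal_flatten (l : seq (fpoly R)) : (forall p, p \in l -> inI p) -> inI (flatten l).
Proof.
elim: l => [|p l IH] h /=; first by apply: ideal0 => w; rewrite coef_nil.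
apply: ideal_cat; first by apply: h; rewrite mem_head.
by apply: IH => r rl; apply: h; rewrite inE rl orbT.
Qed.

Lemma ideal_scale c p : inI p -> inI (scalep c p).
Proof.
move=> [s h]; exists [seq (scalep c t.1.1, t.1.2, t.2) | t <- s] => w.
rewrite coef_scale h !coef_flatten !big_map mulr_sumr; apply: eq_bigr => t _ /=.
rewrite -coef_scale; apply: ceq_sym; apply: ceq_trans (ceq_mul_scalel _ _ _).
exact: ceq_mul (ceq_mul_scalel _ _ _) (fun _ => erefl).
Qed.

Lemma ideal_mull a p : inI p -> inI (mulp a p).
Proof.
move=> [s h]; exists [seq (mulp a t.1.1, t.1.2, t.2) | t <- s].
apply: ceq_trans (ceq_mul (fun _ => erefl) h) _.
apply: ceq_trans (ceq_mul_flattenr _ _) _.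
move=> w; rewrite !coef_flatten !big_map; apply: eq_bigr => t _ /=.
apply: ceq_sym; apply: ceq_trans (ceq_mulA _ _ _).
exact: ceq_mul (ceq_mulA _ _ _) (fun _ => erefl).
Qed.

Lemma ideal_mulr a p : inI p -> inI (mulp p a).
Proof.
move=> [s h]; exists [seq (t.1.1, t.1.2, mulp t.2 a) | t <- s].
apply: ceq_trans (ceq_mul h (fun _ => erefl)) _.
apply: ceq_trans (ceq_mul_flattenl _ _) _.
by move=> w; rewrite !coef_flatten !big_map; apply: eq_bigr => t _; apply: ceq_mulA.
Qed.

Lemma ideal_rel i : inI (nth [::] (rels q) i).
Proof.
exists [:: (onep R, i, onep R)] => w /=; rewrite cats0.
by apply: ceq_sym; apply: ceq_trans (ceq_mulp1 _) (ceq_mul1p _).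
Qed.

Lemma aeq_ceq p r : ceq p r -> aeq q p r.
Proof. by move=> e; apply: ideal0 => w; rewrite coef_sub e subrr. Qed.

Lemma aeq_refl p : aeq q p p.
Proof. exact: aeq_ceq. Qed.

Lemma aeq0 p : aeq q p [::] <-> inI p.
Proof. by split; apply: ideal_ceq => w; rewrite coef_sub coef_nil subr0. Qed.

Lemma aeq_sym p r : aeq q p r -> aeq q r p.
Proof.
move=> h; apply: ideal_ceq (ideal_scale (-1) h) => w.
by rewrite coef_scale !coef_sub; ring.
Qed.

Lemma aeq_trans p r s : aeq q p r -> aeq q r s -> aeq q p s.
Proof.
move=> h1 h2; apply: ideal_ceq (ideal_cat h1 h2) => w.
by rewrite coef_cat !coef_sub; ring.
Qed.

Lemma aeq_cat p p' r r' : aeq q p p' -> aeq q r r' -> aeq q (p ++ r) (p' ++ r').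
Proof.
move=> h1 h2; apply: ideal_ceq (ideal_cat h1 h2) => w.
by rewrite coef_cat !coef_sub !coef_cat; ring.
Qed.

Lemma aeq_scale c p p' : aeq q p p' -> aeq q (scalep c p) (scalep c p').
Proof.
move=> h; apply: ideal_ceq (ideal_scale c h) => w.
by rewrite coef_scale !coef_sub !coef_scale; ring.
Qed.

Lemma aeq_mull a p p' : aeq q p p' -> aeq q (mulp a p) (mulp a p').
Proof.
move=> h; apply: ideal_ceq (ideal_mull a h) => w.
by rewrite coef_sub ceq_mul_catr coef_cat ceq_mul_scaler coef_scale mulN1r.
Qed.

Lemma aeq_mulr a p p' : aeq q p p' -> aeq q (mulp p a) (mulp p' a).
Proof.
move=> h; apply: ideal_ceq (ideal_mulr a h) => w.
by rewrite coef_sub ceq_mul_catl coef_cat ceq_mul_scalel coef_scale mulN1r.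
Qed.

Lemma aeq_ceql p p' r : ceq p p' -> aeq q p' r -> aeq q p r.
Proof. by move=> e; apply: aeq_trans; apply: aeq_ceq. Qed.

Lemma aeq_ceqr p r r' : ceq r r' -> aeq q p r' -> aeq q p r.
Proof. by move=> e h; apply: aeq_trans h _; apply: aeq_ceq; apply: ceq_sym. Qed.

End RelationIdeal.

Section Representation.
Variable R : realType.
Local Notation C := (R[i]).
Variable q : R.
Hypothesis hq : 0 < q.
Implicit Types (p r : fpoly R) (w : seq gen).

Definition fun4 := int -> int -> int -> int -> C.

Lemma fun4_ext (f g : fun4) : (forall a b c d, f a b c d = g a b c d) -> f = g.
Proof. by move=> e; do 4 apply: functional_extensionality => ?; apply: e. Qed.

Definition fun0 : fun4 := fun _ _ _ _ => 0.

Definition lincomb (x : C) (f g : fun4) : fun4 := fun a b c d => x * f a b c d + g a b c d.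

Definition qpow (z : int) : C := q%:C ^ z.

Lemma qC_neq0 : q%:C != 0 :> C.
Proof. by rewrite eq_complex /= negb_and gt_eqF. Qed.

Lemma qpow_gt0 z : 0 < qpow z.
Proof. by rewrite exprz_gt0 // ltcR. Qed.

Lemma qpow_neq0 z : qpow z != 0.
Proof. by rewrite gt_eqF // qpow_gt0. Qed.

Lemma qpowD x y : qpow (x + y) = qpow x * qpow y.
Proof. by rewrite /qpow expfzDr // qC_neq0. Qed.

Lemma qpowN x : qpow (- x) = (qpow x)^-1.
Proof. by rewrite /qpow invr_expz. Qed.

Lemma qpow1 : qpow 1 = q%:C.
Proof. exact: expr1z. Qed.

Definition act_gen (g : gen) (f : fun4) : fun4 :=
  match g with
  | Dl => fun a b c d => f (a - 1) b c d
  | Dli => fun a b c d => f (a + 1) b c d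
  | G11 => fun a b c d => f a (b - 1) c d
  | G12 => fun a b c d => qpow (b - a) * f a b (c - 1) d
  | G21 => fun a b c d => qpow (a + b) * f a b c (d - 1)
  | G22 => fun a b c d => f a (b + 1) c d + qpow (b + b + 1) * f a (b + 1) (c - 1) (d - 1)
  end.

Definition act_word w (f : fun4) : fun4 := foldr act_gen f w.

Definition act p (f : fun4) : fun4 := fun a b c d => \sum_(t <- p) t.1 * act_word t.2 f a b c d.

Lemma act_gen_lincomb g x f1 f2 :
  act_gen g (lincomb x f1 f2) = lincomb x (act_gen g f1) (act_gen g f2).
Proof. by apply: fun4_ext => ? ? ? ?; case: g; rewrite /lincomb /=; ring. Qed.

Lemma act_gen0 g : act_gen g fun0 = fun0.
Proof. by apply: fun4_ext => ? ? ? ?; case: g; rewrite /fun0 /=; ring. Qed.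

Lemma act_word_lincomb w x f1 f2 :
  act_word w (lincomb x f1 f2) = lincomb x (act_word w f1) (act_word w f2).
Proof. by elim: w => //= g w ->; rewrite act_gen_lincomb. Qed.

Lemma act_word0 w : act_word w fun0 = fun0.
Proof. by elim: w => //= g w ->; rewrite act_gen0. Qed.

Lemma act_word_sum w (I : Type) (s : seq I) (F : I -> C) (G : I -> fun4) a b c d :
  act_word w (fun a b c d => \sum_(i <- s) F i * G i a b c d) a b c d
  = \sum_(i <- s) F i * act_word w (G i) a b c d.
Proof.
elim: s => [|i s IH].
  have -> : (fun a b c d => \sum_(i <- [::]) F i * G i a b c d) = fun0.
    by apply: fun4_ext => ? ? ? ?; rewrite big_nil.
  by rewrite act_word0 big_nil.
have -> : (fun a b c d => \sum_(j <- i :: s) F j * G j a b c d) =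
    lincomb (F i) (G i) (fun a b c d => \sum_(j <- s) F j * G j a b c d).
  by apply: fun4_ext => ? ? ? ?; rewrite big_cons.
by rewrite act_word_lincomb /lincomb IH big_cons.
Qed.

Lemma act_word_cat u v f : act_word (u ++ v) f = act_word u (act_word v f).
Proof. exact: foldr_cat. Qed.

Lemma act_ceq p r : ceq p r -> act p = act r.
Proof.
move=> e; apply: functional_extensionality => f; apply: fun4_ext => ? ? ? ?.
apply: (sum_ceq (F := fun c w => c * act_word w f _ _ _ _)) e => [w x y|w].
  exact: mulrDl.
exact: mul0r.
Qed.

Lemma act_nil f a b c d : act [::] f a b c d = 0.
Proof. by rewrite /act big_nil. Qed.

Lemma act_cat p r f a b c d : act (p ++ r) f a b c d = act p f a b c d + act r f a b c d.
Proof. by rewrite /act big_cat. Qed.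

Lemma act_scale x p f a b c d : act (scalep x p) f a b c d = x * act p f a b c d.
Proof. by rewrite /act big_map mulr_sumr; apply: eq_bigr => t _; rewrite mulrA. Qed.

Lemma act_flatten l f a b c d : act (flatten l) f a b c d = \sum_(p <- l) act p f a b c d.
Proof. by rewrite /act big_flatten. Qed.

Lemma act_mul p r f : act (mulp p r) f = act p (act r f).
Proof.
apply: fun4_ext => ? ? ? ?.
rewrite /act big_allpairs_dep /=; apply: eq_bigr => t _.
rewrite act_word_sum mulr_sumr; apply: eq_bigr => u _.
by rewrite act_word_cat mulrA.
Qed.

Lemma act_fun0 p : act p fun0 = fun0.
Proof.
apply: fun4_ext => ? ? ? ?.
by rewrite /act big1 // => t _; rewrite act_word0 /fun0 mulr0.
Qed.

Lemma conjCM (x y : C) : (x * y)^*%R = x^*%R * y^*%R.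
Proof. exact: rmorphM. Qed.

Lemma conjCN (x : C) : (- x)^*%R = - x^*%R.
Proof. exact: rmorphN. Qed.

Lemma conjCV (x : C) : (x^-1)^*%R = (x^*%R)^-1.
Proof. exact: fmorphV. Qed.

Lemma conjC_real (x : R) : (x%:C)^*%R = x%:C.
Proof. exact: conjc_real. Qed.

Ltac solve_rel := apply: fun4_ext => ? ? ? ?;
  rewrite /act /fun0 /dagger /= !big_cons big_nil /= ?subrK ?addrK ?(qpowD, qpowN) ?qpow1;
  rewrite ?add0n ?addn0 ?exprD ?expr1 ?expr0;
  rewrite ?(conjCM, conjCN, conjC1, conjCV, conjC_real);
  rewrite ?mul1r ?mulr1 ?mulN1r ?mulrN1 ?addr0;
  field; rewrite ?qpow_neq0 ?qC_neq0.

Lemma act_rel i f : act (nth [::] (rels q) i) f = fun0.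
Proof.
do 13 (case: i => [|i]; first by solve_rel).
by apply: fun4_ext => ? ? ? ?; rewrite nth_default ?act_nil.
Qed.

Lemma act_ideal p f : in_rel_ideal q p -> act p f = fun0.
Proof.
move=> [s h]; rewrite (act_ceq h); apply: fun4_ext => ? ? ? ?.
rewrite act_flatten big_map big1 // => t _.
by rewrite !act_mul act_rel act_fun0.
Qed.

Lemma act_aeq p p' : aeq q p p' -> act p = act p'.
Proof.
move=> h; apply: functional_extensionality => f.
apply: fun4_ext => a b c d.
have /(congr1 (fun g => g a b c d)) := act_ideal f h.
by rewrite /subp act_cat act_scale mulN1r /fun0 => /eqP; rewrite subr_eq0 => /eqP.
Qed.

Definition dsign w : C := (-1) ^+ count gsign w.

Definition dword w := rev (map gdag w).

Lemma coef_dagger p w :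
  coef (dagger p) w = \sum_(t <- p) (if dword t.2 == w then dsign t.2 * t.1^*%R else 0).
Proof. by rewrite /coef big_map. Qed.

Lemma ceq_dagger p r : ceq p r -> ceq (dagger p) (dagger r).
Proof.
move=> e w; rewrite !coef_dagger.
apply: (sum_ceq (F := fun c u => if dword u == w then dsign u * c^*%R else 0)) e => [u x y|u].
  by case: ifP; rewrite ?addr0 // rmorphD mulrDr.
by case: ifP; rewrite ?rmorph0 ?mulr0.
Qed.

Lemma act_dagger_mul p r f : act (dagger (mulp p r)) f = act (dagger r) (act (dagger p) f).
Proof.
apply: fun4_ext => ? ? ? ?.
rewrite /act /dagger /mulp !big_map big_allpairs_dep /= exchange_big /=.
apply: eq_bigr => y _; rewrite act_word_sum big_map mulr_sumr; apply: eq_bigr => x _ /=.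
rewrite map_cat rev_cat act_word_cat count_cat exprD rmorphM.
by rewrite !mulrA; congr (_ * _); ring.
Qed.

Lemma act_dagger_cat p r f a b c d :
  act (dagger (p ++ r)) f a b c d = act (dagger p) f a b c d + act (dagger r) f a b c d.
Proof. by rewrite /dagger map_cat act_cat. Qed.

Lemma act_dagger_scale x p f a b c d :
  act (dagger (scalep x p)) f a b c d = x^*%R * act (dagger p) f a b c d.
Proof.
rewrite /act /dagger -map_comp !big_map mulr_sumr; apply: eq_bigr => t _ /=.
by rewrite rmorphM; ring.
Qed.

Lemma act_dagger_flatten l f a b c d :
  act (dagger (flatten l)) f a b c d = \sum_(p <- l) act (dagger p) f a b c d.
Proof. by rewrite /dagger map_flatten act_flatten big_map. Qed.

Lemma act_dagger_rel i f : act (dagger (nth [::] (rels q) i)) f = fun0.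
Proof.
do 13 (case: i => [|i]; first by solve_rel).
by apply: fun4_ext => ? ? ? ?; rewrite nth_default ?act_nil.
Qed.

Lemma act_dagger_ideal p f : in_rel_ideal q p -> act (dagger p) f = fun0.
Proof.
move=> [s h]; rewrite (act_ceq (ceq_dagger h)); apply: fun4_ext => ? ? ? ?.
rewrite act_dagger_flatten big_map big1 // => t _.
by rewrite !act_dagger_mul act_dagger_rel act_fun0.
Qed.

Lemma act_dagger_aeq p p' : aeq q p p' -> act (dagger p) = act (dagger p').
Proof.
move=> h; apply: functional_extensionality => f.
apply: fun4_ext => a b c d.
have /(congr1 (fun g => g a b c d)) := act_dagger_ideal f h.
rewrite /subp act_dagger_cat act_dagger_scale rmorphN1 mulN1r /fun0 => /eqP.
by rewrite subr_eq0 => /eqP.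
Qed.

End Representation.

Section PBW.
Variable R : realType.
Local Notation C := (R[i]).
Variable q : R.
Hypothesis hq : 0 < q.
Implicit Types (p r : fpoly R) (P : xpoly R).

Definition monp (c : C) (w : seq gen) : fpoly R := [:: (c, w)].

Lemma ceq_on_support p r :
  foldr (fun w E => coef p w = coef r w /\ E) True (undup (map snd (p ++ r))) -> ceq p r.
Proof.
move=> h w; case: (boolP (w \in undup (map snd (p ++ r)))) => [wS|wS].
  elim: (undup _) wS h => // x s IH; rewrite inE => /orP [/eqP -> []| ws [] _] //.
  exact: IH.
have coef_out p' : {subset map snd p' <= map snd (p ++ r)} -> coef p' w = 0.
  move=> sub; rewrite /coef big_seq big1 // => t tp; case: ifP => // /eqP e.
  by case/negP: wS; rewrite mem_undup -e sub ?map_f.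
by rewrite !coef_out // => x xi; rewrite map_cat mem_cat xi ?orbT.
Qed.

Lemma sqrt_gt0 : 0 < (Num.sqrt q)%:C :> C.
Proof. by rewrite ltcR sqrtr_gt0. Qed.

Lemma sqrt_neq0 : (Num.sqrt q)%:C != 0 :> C.
Proof. by rewrite gt_eqF // sqrt_gt0. Qed.

Ltac solve_ceq := apply: ceq_on_support; rewrite /= /coef !big_cons !big_nil /=;
  rewrite ?mul1r ?mulr1 ?mulN1r ?mulrN1 ?addr0 ?add0r; repeat split;
  field; rewrite ?sqrt_neq0 ?(qC_neq0 hq).

Ltac rel_of k := apply: (ideal_ceq _ (ideal_rel q k)); solve_ceq.

Lemma comm_g11_g12 : aeq q (monp 1 [:: G11; G12]) (monp q%:C^-1 [:: G12; G11]).
Proof. rel_of 0%N. Qed.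

Lemma comm_g11_g21 : aeq q (monp 1 [:: G11; G21]) (monp q%:C^-1 [:: G21; G11]).
Proof. rel_of 1%N. Qed.

Lemma comm_g12_g22 : aeq q (monp 1 [:: G12; G22]) (monp q%:C^-1 [:: G22; G12]).
Proof. rel_of 2%N. Qed.

Lemma comm_g21_g22 : aeq q (monp 1 [:: G21; G22]) (monp q%:C^-1 [:: G22; G21]).
Proof. rel_of 3%N. Qed.

Lemma comm_g12_g21 : aeq q (monp 1 [:: G12; G21]) (monp 1 [:: G21; G12]).
Proof. rel_of 4%N. Qed.

Lemma det_g11_g22 : aeq q (monp 1 [:: G11; G22]) (monp q%:C^-1 [:: G12; G21] ++ monp 1 [::]).
Proof. rel_of 5%N. Qed.

Lemma det_g22_g11 : aeq q (monp 1 [:: G22; G11]) (monp q%:C [:: G21; G12] ++ monp 1 [::]).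
Proof. rel_of 6%N. Qed.

Lemma comm_delta_g11 : aeq q (monp 1 [:: Dl; G11]) (monp 1 [:: G11; Dl]).
Proof. rel_of 7%N. Qed.

Lemma comm_delta_g12 : aeq q (monp 1 [:: Dl; G12]) (monp q%:C [:: G12; Dl]).
Proof. rel_of 8%N. Qed.

Lemma comm_delta_g21 : aeq q (monp 1 [:: Dl; G21]) (monp q%:C^-1 [:: G21; Dl]).
Proof. rel_of 9%N. Qed.

Lemma comm_delta_g22 : aeq q (monp 1 [:: Dl; G22]) (monp 1 [:: G22; Dl]).
Proof. rel_of 10%N. Qed.

Lemma aeq_monp_inv (c : C) l1 l2 : c != 0 ->
  aeq q (monp 1 l1) (monp c l2) -> aeq q (monp 1 l2) (monp c^-1 l1).
Proof.
move=> c0 h; have := aeq_sym (aeq_scale c^-1 h); rewrite /scalep /= => h'.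
by apply: (aeq_ceql _ (aeq_ceqr _ h')) => w; rewrite /coef !big_seq1 /= ?mulVf ?mulr1.
Qed.

Lemma aeq_monp_inv1 l1 l2 : aeq q (monp 1 l1) (monp 1 l2) -> aeq q (monp 1 l2) (monp 1 l1).
Proof. by move/(aeq_monp_inv (oner_neq0 _)); rewrite invr1. Qed.

Lemma comm_g11_delta : aeq q (monp 1 [:: G11; Dl]) (monp 1 [:: Dl; G11]).
Proof. exact: aeq_monp_inv1 comm_delta_g11. Qed.

Lemma comm_g12_delta : aeq q (monp 1 [:: G12; Dl]) (monp q%:C^-1 [:: Dl; G12]).
Proof. exact: aeq_monp_inv (qC_neq0 hq) comm_delta_g12. Qed.

Lemma comm_g21_delta : aeq q (monp 1 [:: G21; Dl]) (monp q%:C [:: Dl; G21]).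
Proof.
by rewrite -[q%:C]invrK; apply: aeq_monp_inv comm_delta_g21; rewrite invr_eq0 (qC_neq0 hq).
Qed.

Lemma comm_g22_delta : aeq q (monp 1 [:: G22; Dl]) (monp 1 [:: Dl; G22]).
Proof. exact: aeq_monp_inv1 comm_delta_g22. Qed.

Lemma comm_g21_g12 : aeq q (monp 1 [:: G21; G12]) (monp 1 [:: G12; G21]).
Proof. exact: aeq_monp_inv1 comm_g12_g21. Qed.

Lemma mulp_monpl a u p : mulp (monp a u) p = [seq (a * t.1, u ++ t.2) | t <- p].
Proof. by rewrite /mulp /= cats0. Qed.

Lemma mulp_monpr a u p : mulp p (monp a u) = [seq (t.1 * a, t.2 ++ u) | t <- p].
Proof. by elim: p => //= t p IH; rewrite /mulp /= in IH *; rewrite IH. Qed.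

Lemma aeq_monp_context u l v (c : C) (P : fpoly R) :
  aeq q (monp 1 l) P -> aeq q (monp c (u ++ l ++ v)) [seq (c * t.1, u ++ t.2 ++ v) | t <- P].
Proof.
move=> h; have := aeq_scale c (aeq_mull (monp 1 u) (aeq_mulr (monp 1 v) h)).
rewrite !mulp_monpr !mulp_monpl /scalep -!map_comp => h'.
apply: (aeq_ceql _ (aeq_ceqr _ h')) => w; first by rewrite /coef !big_seq1 /= !mulr1.
by congr coef; apply: eq_map => t /=; rewrite !mulr1 mul1r.
Qed.

Lemma aeq_rewrite u l v (c : C) (P rest N : fpoly R) :
  aeq q (monp 1 l) P -> aeq q ([seq (c * t.1, u ++ t.2 ++ v) | t <- P] ++ rest) N ->
  aeq q ((c, u ++ l ++ v) :: rest) N.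
Proof.
by move=> h; apply: aeq_trans; apply: (aeq_cat (aeq_monp_context u v c h) (aeq_refl _ _)).
Qed.

Lemma aeq_rotate t (rest N : fpoly R) : aeq q (rest ++ [:: t]) N -> aeq q (t :: rest) N.
Proof. by apply: aeq_ceql => w; rewrite /coef big_cons big_cat big_seq1 addrC. Qed.

(* The factors [1 * 1] mirror [xgen], so that [xgenE] holds by computation. *)
Definition xcoef (k : 'I_4) : C :=
  let s := (Num.sqrt q)%:C in
  match val k with 0 => 1 * 1 | 1 => s^-1 * (1 * 1) | 2 => s * (1 * 1) | _ => 1 * 1 end.

Definition xword (k : 'I_4) : seq gen :=
  match val k with
  | 0 => [:: Dl; G11] | 1 => [:: Dl; G12] | 2 => [:: Dl; G21] | _ => [:: Dl; G22]
  end.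

Lemma xgenE k : xgen q k = monp (xcoef k) (xword k).
Proof. by case: k => [[|[|[|[|]]]] ?]. Qed.

Definition xmon (w : seq 'I_4) : fpoly R := prodp (map (xgen q) w).

Definition xmon_coef (w : seq 'I_4) : C := foldr (fun k c => xcoef k * c) 1 w.

Definition xmon_word (w : seq 'I_4) : seq gen := flatten (map xword w).

Lemma xmonE w : xmon w = monp (xmon_coef w) (xmon_word w).
Proof. by elim: w => //= k w IH; rewrite /xmon /= -/(xmon w) IH xgenE. Qed.

Lemma xmon_coef_cat u v : xmon_coef (u ++ v) = xmon_coef u * xmon_coef v.
Proof. by elim: u => /= [|k u ->]; rewrite ?mul1r ?mulrA. Qed.

Lemma xmon_word_cat u v : xmon_word (u ++ v) = xmon_word u ++ xmon_word v.
Proof. by rewrite /xmon_word map_cat flatten_cat. Qed.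

Lemma xmon_cat u v : xmon (u ++ v) = mulp (xmon u) (xmon v).
Proof. by rewrite !xmonE /monp /mulp /= xmon_coef_cat xmon_word_cat. Qed.

Lemma xembedE P : xembed q P = [seq (t.1 * xmon_coef t.2, xmon_word t.2) | t <- P].
Proof. by elim: P => //= t P IH; rewrite /xembed /= -/(xembed q P) IH -/(xmon t.2) xmonE. Qed.

Lemma xembed_cat P P' : xembed q (P ++ P') = xembed q P ++ xembed q P'.
Proof. by rewrite /xembed map_cat flatten_cat. Qed.

Definition o0 : 'I_4 := @Ordinal 4 0 isT.
Definition o1 : 'I_4 := @Ordinal 4 1 isT.
Definition o2 : 'I_4 := @Ordinal 4 2 isT.
Definition o3 : 'I_4 := @Ordinal 4 3 isT.

Lemma ord4E (k : 'I_4) : [\/ k = o0, k = o1, k = o2 | k = o3].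
Proof.
by case: k => [[|[|[|[|//]]]] ?]; [apply: Or41|apply: Or42|apply: Or43|apply: Or44]; apply: val_inj.
Qed.

Ltac unfold_xmon := rewrite xmonE xembedE /xmon_coef /xmon_word /xcoef /=.

Lemma xswap10 : aeq q (xmon [:: o1; o0]) (xembed q [:: (1, [:: o0; o1])]).
Proof.
unfold_xmon; apply: (aeq_trans (r := monp ((Num.sqrt q)%:C^-1 / q%:C) [:: Dl; Dl; G12; G11])).
  apply: (aeq_rewrite (u := [:: Dl]) (v := [:: G11]) comm_g12_delta) => /=.
  by apply: aeq_ceq; solve_ceq.
apply: aeq_sym; apply: (aeq_rewrite (u := [:: Dl]) (v := [:: G12]) comm_g11_delta) => /=.
apply: (aeq_rewrite (u := [:: Dl; Dl]) (v := [::]) comm_g11_g12) => /=.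
by apply: aeq_ceq; solve_ceq.
Qed.

Lemma xswap20 : aeq q (xmon [:: o2; o0]) (xembed q [:: (q%:C ^+ 2, [:: o0; o2])]).
Proof.
unfold_xmon; apply: (aeq_trans (r := monp ((Num.sqrt q)%:C * q%:C) [:: Dl; Dl; G21; G11])).
  apply: (aeq_rewrite (u := [:: Dl]) (v := [:: G11]) comm_g21_delta) => /=.
  by apply: aeq_ceq; solve_ceq.
apply: aeq_sym; apply: (aeq_rewrite (u := [:: Dl]) (v := [:: G21]) comm_g11_delta) => /=.
apply: (aeq_rewrite (u := [:: Dl; Dl]) (v := [::]) comm_g11_g21) => /=.
by apply: aeq_ceq; solve_ceq.
Qed.

Lemma xswap30 :
  aeq q (xmon [:: o3; o0]) (xembed q [:: (1, [:: o0; o3]); (q%:C ^+ 2 - 1, [:: o1; o2])]).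
Proof.
unfold_xmon; apply: (aeq_trans (r := monp q%:C [:: Dl; Dl; G12; G21] ++ monp 1 [:: Dl; Dl])).
  apply: (aeq_rewrite (u := [:: Dl]) (v := [:: G11]) comm_g22_delta) => /=.
  apply: (aeq_rewrite (u := [:: Dl; Dl]) (v := [::]) det_g22_g11) => /=.
  apply: (aeq_rewrite (u := [:: Dl; Dl]) (v := [::]) comm_g21_g12) => /=.
  by apply: aeq_ceq; solve_ceq.
apply: aeq_sym; apply: (aeq_rewrite (u := [:: Dl]) (v := [:: G22]) comm_g11_delta) => /=.
apply: (aeq_rewrite (u := [:: Dl; Dl]) (v := [::]) det_g11_g22) => /=.
apply: aeq_rotate; apply: aeq_rotate => /=.
apply: (aeq_rewrite (u := [:: Dl]) (v := [:: G21]) comm_g12_delta) => /=.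
by apply: aeq_ceq; solve_ceq.
Qed.

Lemma xswap21 : aeq q (xmon [:: o2; o1]) (xembed q [:: (q%:C ^+ 2, [:: o1; o2])]).
Proof.
unfold_xmon; apply: (aeq_trans (r := monp q%:C [:: Dl; Dl; G12; G21])).
  apply: (aeq_rewrite (u := [:: Dl]) (v := [:: G12]) comm_g21_delta) => /=.
  apply: (aeq_rewrite (u := [:: Dl; Dl]) (v := [::]) comm_g21_g12) => /=.
  by apply: aeq_ceq; solve_ceq.
apply: aeq_sym; apply: (aeq_rewrite (u := [:: Dl]) (v := [:: G21]) comm_g12_delta) => /=.
by apply: aeq_ceq; solve_ceq.
Qed.

Lemma xswap31 : aeq q (xmon [:: o3; o1]) (xembed q [:: (q%:C ^+ 2, [:: o1; o3])]).
Proof.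
unfold_xmon; apply: (aeq_trans (r := monp (Num.sqrt q)%:C^-1 [:: Dl; Dl; G22; G12])).
  apply: (aeq_rewrite (u := [:: Dl]) (v := [:: G12]) comm_g22_delta) => /=.
  by apply: aeq_ceq; solve_ceq.
apply: aeq_sym; apply: (aeq_rewrite (u := [:: Dl]) (v := [:: G22]) comm_g12_delta) => /=.
apply: (aeq_rewrite (u := [:: Dl; Dl]) (v := [::]) comm_g12_g22) => /=.
by apply: aeq_ceq; solve_ceq.
Qed.

Lemma xswap32 : aeq q (xmon [:: o3; o2]) (xembed q [:: (1, [:: o2; o3])]).
Proof.
unfold_xmon; apply: (aeq_trans (r := monp (Num.sqrt q)%:C [:: Dl; Dl; G22; G21])).
  apply: (aeq_rewrite (u := [:: Dl]) (v := [:: G21]) comm_g22_delta) => /=.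
  by apply: aeq_ceq; solve_ceq.
apply: aeq_sym; apply: (aeq_rewrite (u := [:: Dl]) (v := [:: G22]) comm_g21_delta) => /=.
apply: (aeq_rewrite (u := [:: Dl; Dl]) (v := [::]) comm_g21_g22) => /=.
by apply: aeq_ceq; solve_ceq.
Qed.

Definition ord_leq : rel 'I_4 := fun x y => (x <= y)%N.

Definition sorted_xpoly P := forall t, t \in P -> sorted ord_leq t.2.

(* Decreases when an adjacent descent is replaced by the right-hand side of an
   xswap lemma. *)
Definition word_rank (w : seq 'I_4) : nat := foldl (fun n (k : 'I_4) => n * 4 + k)%N 0%N w.

Lemma foldl_word_rank n w :
  foldl (fun n (k : 'I_4) => n * 4 + k)%N n w = (n * 4 ^ size w + word_rank w)%N.
Proof.
rewrite /word_rank; elim: w n => [|k w IH] n /=; first by rewrite muln1 addn0.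
by rewrite IH [in RHS]IH mul0n add0n expnS mulnDl addnA mulnA.
Qed.

Lemma word_rank_context u v s s' : size s = 2%N -> size s' = 2%N ->
  (word_rank s < word_rank s')%N -> (word_rank (u ++ s ++ v) < word_rank (u ++ s' ++ v))%N.
Proof.
move=> s2 s'2 lt; rewrite /word_rank !foldl_cat -/(word_rank u) !foldl_word_rank s2 s'2.
by rewrite ltn_add2r ltn_pmul2r ?expn_gt0 // ltn_add2l.
Qed.

Lemma unsorted_descent w : ~~ sorted ord_leq w ->
  exists u y x v, w = u ++ [:: y; x] ++ v /\ (x < y)%N.
Proof.
elim: w => // a [|b w] IH //= /nandP [nab|/IH [u [y [x [v [-> lt]]]]]].
  by exists [::], a, b, w; rewrite ltnNge.
by exists (a :: u), y, x, v.
Qed.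

Lemma xswap (y x : 'I_4) : (x < y)%N ->
  exists P, aeq q (xmon [:: y; x]) (xembed q P) /\
    forall t, t \in P -> size t.2 = 2%N /\ (word_rank t.2 < word_rank [:: y; x])%N.
Proof.
have one c w : (forall t, t \in [:: (c, w)] -> t = (c, w)) by move=> t /[1!inE] /eqP.
by case: (ord4E y) => ->; case: (ord4E x) => -> //= _;
  [exists [:: (1, [:: o0; o1])]; split; [exact: xswap10 | move=> t /one ->]
  |exists [:: (q%:C ^+ 2, [:: o0; o2])]; split; [exact: xswap20 | move=> t /one ->]
  |exists [:: (q%:C ^+ 2, [:: o1; o2])]; split; [exact: xswap21 | move=> t /one ->]
  |exists [:: (1, [:: o0; o3]); (q%:C ^+ 2 - 1, [:: o1; o2])]; split;
     [exact: xswap30 | by move=> t /[!inE] /orP [] /eqP ->]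
  |exists [:: (q%:C ^+ 2, [:: o1; o3])]; split; [exact: xswap31 | move=> t /one ->]
  |exists [:: (1, [:: o2; o3])]; split; [exact: xswap32 | move=> t /one ->]].
Qed.

Lemma xmon_context u l v P : aeq q (xmon l) (xembed q P) ->
  aeq q (xmon (u ++ l ++ v)) (xembed q [seq (t.1, u ++ t.2 ++ v) | t <- P]).
Proof.
move=> h; rewrite !xmon_cat; apply: aeq_trans (aeq_mull _ (aeq_mulr _ h)) _.
apply: aeq_ceq => w; congr coef.
rewrite !xmonE !xembedE mulp_monpr mulp_monpl -!map_comp; apply: eq_map => t /=.
by rewrite !xmon_coef_cat !xmon_word_cat; congr (_, _); ring.
Qed.

Definition pbw_reducible (w : seq 'I_4) :=
  exists P, sorted_xpoly P /\ aeq q (xmon w) (xembed q P).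

Lemma pbw_xembed (L : xpoly R) : (forall t, t \in L -> pbw_reducible t.2) ->
  exists P, sorted_xpoly P /\ aeq q (xembed q L) (xembed q P).
Proof.
elim: L => [|[c w] L IH] h; first by exists [::]; split => //; exact: aeq_refl.
have [P [sP eP]] := h (c, w) (mem_head _ _).
have [P' [sP' eP']] := IH (fun t tL => h t (mem_behead (s := (c, w) :: L) tL)).
exists ([seq (c * t.1, t.2) | t <- P] ++ P'); split.
  by move=> t; rewrite mem_cat => /orP [/mapP [t' /sP ? ->]|/sP'].
rewrite xembed_cat; apply: aeq_cat eP'; apply: aeq_trans (aeq_scale c eP) _.
apply: aeq_ceq => u; congr coef; rewrite !xembedE /scalep -!map_comp.
by apply: eq_map => t /=; rewrite mulrA.
Qed.

Lemma pbw_xmon w : pbw_reducible w.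
Proof.
have [n] := ubnP (word_rank w); elim: n w => // n IH w /ltnSE rw.
have [sw|/unsorted_descent [u [y [x [v [ew lt]]]]]] := boolP (sorted ord_leq w); last subst w.
  exists [:: (1, w)]; split; first by move=> t /[1!inE] /eqP ->.
  by apply: aeq_ceq => u; rewrite xmonE xembedE /= mul1r.
have [P [eP hP]] := xswap lt.
have [P' [sP' eP']] : exists P', sorted_xpoly P' /\
    aeq q (xembed q [seq (t.1, u ++ t.2 ++ v) | t <- P]) (xembed q P').
  apply: pbw_xembed => _ /mapP [t tP ->]; apply: IH.
  have [s2 r2] := hP t tP.
  exact: leq_trans (word_rank_context u v s2 (erefl : size [:: y; x] = 2%N) r2) rw.
by exists P'; split => //; apply: aeq_trans (xmon_context u v eP) eP'.
Qed.

End PBW.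

Section Cone.
Variable R : realType.
Local Notation C := (R[i]).
Variable q : R.
Hypothesis hq : 0 < q.

Definition cone_at (f : fun4 R) (b1 b2 b3 b4 : int) (v : C) :=
  f b1 b2 b3 b4 = v /\ forall m1 m2 m3 m4, f m1 m2 m3 m4 != 0 ->
    [/\ m1 = b1, m2 = b2 & exists r : nat, m3 = b3 + r%:Z /\ m4 = b4 + r%:Z].

Lemma cone_at_eq (f : fun4 R) b1 b2 b3 b4 b1' b2' b3' b4' v :
  b1 = b1' -> b2 = b2' -> b3 = b3' -> b4 = b4' ->
  cone_at f b1 b2 b3 b4 v -> cone_at f b1' b2' b3' b4' v.
Proof. by move=> -> -> -> ->. Qed.

Definition shift1 (g : gen) : int := match g with Dl => 1 | Dli => -1 | _ => 0 end.
Definition shift2 (g : gen) : int := match g with G11 => 1 | G22 => -1 | _ => 0 end.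
Definition shift3 (g : gen) : int := match g with G12 => 1 | _ => 0 end.
Definition shift4 (g : gen) : int := match g with G21 => 1 | _ => 0 end.

Lemma cone_at_act_gen g f b1 b2 b3 b4 v : cone_at f b1 b2 b3 b4 v -> 0 < v ->
  exists2 v', 0 < v' &
    cone_at (act_gen q g f) (b1 + shift1 g) (b2 + shift2 g) (b3 + shift3 g) (b4 + shift4 g) v'.
Proof.
move=> [fb supp] v0; case: g => /=; rewrite ?addr0.
- exists v => //; split; first by rewrite addrK.
  by move=> m1 m2 m3 m4 /supp [e1 e2 e3]; split => //; lia.
- exists (qpow q (b2 - b1) * v); first by rewrite mulr_gt0 // qpow_gt0.
  split; first by rewrite addrK fb.
  move=> m1 m2 m3 m4; rewrite mulf_eq0 negb_or => /andP [_ /supp [e1 e2 [r [e3 e4]]]].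
  by split => //; exists r; split => //; lia.
- exists (qpow q (b1 + b2) * v); first by rewrite mulr_gt0 // qpow_gt0.
  split; first by rewrite addrK fb.
  move=> m1 m2 m3 m4; rewrite mulf_eq0 negb_or => /andP [_ /supp [e1 e2 [r [e3 e4]]]].
  by split => //; exists r; split => //; lia.
- exists v => //; split.
    rewrite subrK fb.
    (* the second summand of g22' is evaluated strictly below the apex *)
    have -> : f b1 b2 (b3 - 1) (b4 - 1) = 0.
      by apply/eqP; apply: contraT => /supp [_ _ [r [e3 _]]]; lia.
    by rewrite mulr0 addr0.
  move=> m1 m2 m3 m4 h.
  have [|] : f m1 (m2 + 1) m3 m4 != 0 \/ f m1 (m2 + 1) (m3 - 1) (m4 - 1) != 0.
    case: (eqVneq (f m1 (m2 + 1) m3 m4) 0) => [e|]; last by left.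
    by right; move: h; rewrite e add0r mulf_eq0 negb_or => /andP [].
    by move=> /supp [e1 e2 [r [e3 e4]]]; split; try lia; exists r; split; lia.
  by move=> /supp [e1 e2 [r [e3 e4]]]; split; try lia; exists r.+1; split; lia.
- exists v => //; split; first by rewrite addrK.
  by move=> m1 m2 m3 m4 /supp [e1 e2 e3]; split => //; lia.
- exists v => //; split; first by rewrite subrK.
  by move=> m1 m2 m3 m4 /supp [e1 e2 e3]; split => //; lia.
Qed.

Definition word_shift (sh : gen -> int) (w : seq gen) : int := \sum_(g <- w) sh g.

Lemma cone_at_act_word w f b1 b2 b3 b4 v : cone_at f b1 b2 b3 b4 v -> 0 < v ->
  exists2 v', 0 < v' & cone_at (act_word q w f)
    (b1 + word_shift shift1 w) (b2 + word_shift shift2 w)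
    (b3 + word_shift shift3 w) (b4 + word_shift shift4 w) v'.
Proof.
move=> h v0; elim: w => [|g w [v' v'0 IH]].
  by exists v => //; rewrite /word_shift !big_nil !addr0.
have [v'' v''0 h'] := cone_at_act_gen g IH v'0.
exists v'' => //; by apply: (cone_at_eq _ _ _ _ h'); rewrite /word_shift big_cons addrAC addrA.
Qed.

Definition delta_origin : fun4 R :=
  fun a b c d => if (a == 0) && (b == 0) && (c == 0) && (d == 0) then 1 else 0.

Lemma cone_at_delta_origin : cone_at delta_origin 0 0 0 0 1.
Proof.
split=> [|m1 m2 m3 m4]; first by rewrite /delta_origin eqxx.
rewrite /delta_origin; case: (m1 =P 0) => [->|]; last by rewrite eqxx.
case: (m2 =P 0) => [->|]; last by rewrite eqxx.
case: (m3 =P 0) => [->|]; last by rewrite eqxx.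
case: (m4 =P 0) => [->|]; last by rewrite eqxx.
by split => //; exists 0%N.
Qed.

End Cone.

Lemma size_count_mem4 (w : seq 'I_4) :
  size w = (count_mem o0 w + count_mem o1 w + count_mem o2 w + count_mem o3 w)%N.
Proof. by elim: w => //= k w ->; case: (ord4E k) => ->; rewrite /= ?add0n ?add1n; lia. Qed.

Lemma sorted_count_mem_eq (w w' : seq 'I_4) : sorted ord_leq w -> sorted ord_leq w' ->
  (forall k, count_mem k w = count_mem k w') -> w = w'.
Proof.
move=> sw sw' ew; apply: (sorted_eq _ _ sw sw'); first exact: leq_trans.
  by move=> x y /andP [xy yx]; apply: val_inj; apply/eqP; rewrite eqn_leq; apply/andP.
by apply/allP => k _; apply/eqP.
Qed.

Lemma word_shift_cat sh u v : word_shift sh (u ++ v) = word_shift sh u + word_shift sh v.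
Proof. exact: big_cat. Qed.

Lemma word_shift_xmon_word w :
  [/\ word_shift shift1 (xmon_word w) = (size w)%:Z,
      word_shift shift2 (xmon_word w) = (count_mem o0 w)%:Z - (count_mem o3 w)%:Z,
      word_shift shift3 (xmon_word w) = (count_mem o1 w)%:Z
    & word_shift shift4 (xmon_word w) = (count_mem o2 w)%:Z].
Proof.
elim: w => [|k w [e1 e2 e3 e4]]; first by rewrite /word_shift !big_nil.
rewrite /xmon_word /= -/(xmon_word w) !word_shift_cat e1 e2 e3 e4.
by case: (ord4E k) => ->; rewrite /word_shift /= !big_cons !big_nil /=; split; lia.
Qed.

Lemma word_shift_dword w :
  [/\ word_shift shift1 (dword w) = word_shift shift1 w,
      word_shift shift2 (dword w) = - word_shift shift2 w,
      word_shift shift3 (dword w) = word_shift shift4 w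
    & word_shift shift4 (dword w) = word_shift shift3 w].
Proof.
rewrite /word_shift /dword !big_rev !big_map -sumrN.
by split; apply: eq_bigr; case.
Qed.

Lemma count_gsign_xmon_word w : count gsign (xmon_word w) = (count_mem o1 w + count_mem o2 w)%N.
Proof.
elim: w => //= k w IH; rewrite /xmon_word /= -/(xmon_word w) count_cat IH.
by case: (ord4E k) => ->; rewrite /=; lia.
Qed.

Section Theta.
Variable R : realType.
Local Notation C := (R[i]).
Variable q : R.
Hypothesis hq : 0 < q.

Definition theta (N t : nat) (w w' : seq 'I_4) : C :=
  act q (mulp (dagger (xmon q w)) (xmon q w')) (@delta_origin R) (N + N)%N%:Z 0 t%:Z t%:Z.

Lemma act_word_scale w x (f : fun4 R) :
  act_word q w (fun a b c d => x * f a b c d) = fun a b c d => x * act_word q w f a b c d.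
Proof.
elim: w => //= g w ->; apply: fun4_ext => a b c d.
by case: g => /=; ring.
Qed.

Lemma act_monp c w (f : fun4 R) a b c' d :
  act q (monp c w) f a b c' d = c * act_word q w f a b c' d.
Proof. by rewrite /act big_seq1. Qed.

Lemma thetaE N t w w' : theta N t w w' =
  dsign R (xmon_word w) * (xmon_coef q w)^*%R * xmon_coef q w' *
  act_word q (dword (xmon_word w) ++ xmon_word w') (@delta_origin R) (N + N)%N%:Z 0 t%:Z t%:Z.
Proof.
rewrite /theta act_mul !xmonE act_monp.
have -> : act q (monp (xmon_coef q w') (xmon_word w')) (@delta_origin R) =
    fun a b c d => xmon_coef q w' * act_word q (xmon_word w') (@delta_origin R) a b c d.
  by apply: fun4_ext => a b c d; rewrite act_monp.
by rewrite act_word_scale act_word_cat mulrA.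
Qed.

Lemma cone_at_theta w w' : exists2 v, 0 < v &
  cone_at (act_word q (dword (xmon_word w) ++ xmon_word w') (@delta_origin R))
    (size w + size w')%N%:Z
    ((count_mem o0 w')%:Z - (count_mem o3 w')%:Z - ((count_mem o0 w)%:Z - (count_mem o3 w)%:Z))
    (count_mem o2 w + count_mem o1 w')%N%:Z (count_mem o1 w + count_mem o2 w')%N%:Z v.
Proof.
have [v v0 h] := cone_at_act_word hq (dword (xmon_word w) ++ xmon_word w')
  (@cone_at_delta_origin R) ltr01.
exists v => //; apply: (cone_at_eq _ _ _ _ h); rewrite !word_shift_cat;
  have [a1 a2 a3 a4] := word_shift_dword (xmon_word w);
  have [b1 b2 b3 b4] := word_shift_xmon_word w;
  have [c1 c2 c3 c4] := word_shift_xmon_word w';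
  rewrite ?a1 ?a2 ?a3 ?a4 ?b1 ?b2 ?b3 ?b4 ?c1 ?c2 ?c3 ?c4; lia.
Qed.

Lemma theta_neq0 N t w w' : sorted ord_leq w -> sorted ord_leq w' ->
  (size w <= N)%N -> (size w' <= N)%N ->
  (size w = N -> t <= count_mem o1 w + count_mem o2 w)%N ->
  (size w' = N -> t <= count_mem o1 w' + count_mem o2 w')%N ->
  theta N t w w' != 0 -> [/\ w = w', size w = N & (count_mem o1 w + count_mem o2 w)%N = t].
Proof.
move=> sw sw' lw lw' tw tw'; rewrite thetaE mulf_eq0 negb_or => /andP [_ nz].
have [v _ [_ /(_ _ _ _ _ nz) [e1 e2 [r [e3 e4]]]]] := cone_at_theta w w'.
have := size_count_mem4 w; have := size_count_mem4 w' => S' S.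
have [eN eN'] : size w = N /\ size w' = N by lia.
have := tw eN; have := tw' eN' => t' t1.
split => //; last by lia.
by apply: sorted_count_mem_eq => // k; case: (ord4E k) => ->; lia.
Qed.

Lemma xmon_coef_gt0 w : 0 < xmon_coef q w.
Proof.
elim: w => [|k w IH] /=; first exact: ltr01.
rewrite mulr_gt0 // /xcoef; have := sqrt_gt0 hq.
by case: (ord4E k) => -> /= s0; rewrite ?mulr1 ?ltr01 ?invr_gt0.
Qed.

Lemma theta_diag_gt0 N t w : size w = N -> (count_mem o1 w + count_mem o2 w)%N = t ->
  0 < (-1) ^+ t * theta N t w w.
Proof.
move=> eN et; rewrite thetaE /dsign count_gsign_xmon_word et.
have [v v0 [hv _]] := cone_at_theta w w.
have -> : act_word q (dword (xmon_word w) ++ xmon_word w) (@delta_origin R)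
    (N + N)%N%:Z 0 t%:Z t%:Z = v.
  by rewrite -hv; congr act_word; rewrite ?eN ?subrr //; lia.
rewrite !mulrA -exprD addnn -mul2n exprM sqrrN !expr1n mul1r.
by rewrite mulr_gt0 // mulrC mul_conjC_gt0 gt_eqF // xmon_coef_gt0.
Qed.

End Theta.

Section HermitianForm.
Variable R : realType.
Local Notation C := (R[i]).
Variable U : lmodType C.
Variable form : U -> U -> C.
Hypothesis hform : hermitian_inner_product form.

Lemma hermDr u v w : form u (v + w) = form u v + form u w.
Proof. by case: hform => _ h _ _; rewrite -{1}[v]scale1r h mul1r. Qed.

Lemma herm0r u : form u 0 = 0.
Proof. by apply: (addrI (form u 0)); rewrite -hermDr !addr0. Qed.

Lemma hermZr u c v : form u (c *: v) = c * form u v.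
Proof. by case: hform => _ h _ _; rewrite -[c *: v]addr0 h herm0r addr0. Qed.

Lemma hermDl u v w : form (u + v) w = form u w + form v w.
Proof. by case: hform => h _ _ _; rewrite -{1}[u]scale1r h rmorph1 mul1r. Qed.

Lemma herm0l v : form 0 v = 0.
Proof. by apply: (addrI (form 0 v)); rewrite -hermDl !addr0. Qed.

Lemma hermZl c u v : form (c *: u) v = c^*%R * form u v.
Proof. by case: hform => h _ _ _; rewrite -[c *: u]addr0 h herm0l addr0. Qed.

Lemma herm_gt0 u : u != 0 -> 0 < form u u.
Proof. by case: hform => _ _ _; apply. Qed.

Definition herm_lfun (u : U) : {linear U -> C^o} :=
  HB.pack_for {linear U -> C^o} (form u) (GRing.isLinear.Build _ _ _ _ (form u)
    (fun a v w => etrans (hermDr _ _ _) (congr1 (+%R^~ _) (hermZr _ _ _)))).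

End HermitianForm.


Section ExtremalWords.
Variable R : realType.
Local Notation C := (R[i]).
Variable q : R.
Hypothesis hq : 0 < q.
Variable U : vectType C.
Variable form : U -> U -> C.
Hypothesis hform : hermitian_inner_product form.
Variables (S : seq (seq 'I_4)) (V : seq 'I_4 -> U).
Hypothesis uniq_S : uniq S.
Hypothesis sorted_S : forall w, w \in S -> sorted ord_leq w.

Definition theta_form_sum N t :=
  \sum_(w <- S) \sum_(w' <- S) form (V w) (V w') * theta q N t w w'.

Section Extremal.
Variables N t : nat.
Hypothesis size_max : forall w, w \in S -> V w != 0 -> (size w <= N)%N.
Hypothesis count_min : forall w, w \in S -> V w != 0 -> size w = N ->
  (t <= count_mem o1 w + count_mem o2 w)%N.

Definition extremal w :=
  [&& V w != 0, size w == N & (count_mem o1 w + count_mem o2 w == t)%N].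

Lemma theta_form_sum_diag : theta_form_sum N t =
  \sum_(w <- S) if extremal w then form (V w) (V w) * theta q N t w w else 0.
Proof.
rewrite /theta_form_sum big_seq [RHS]big_seq; apply: eq_bigr => w wS.
have theta_nz w' : w' \in S -> V w != 0 -> V w' != 0 -> theta q N t w w' != 0 ->
    [/\ w = w', size w = N & (count_mem o1 w + count_mem o2 w)%N = t].
  move=> w'S nzw nzw'; apply: theta_neq0 => //; do ?[exact: sorted_S | exact: size_max];
  exact: count_min.
rewrite (bigD1_seq w) //= big_seq_cond big1 ?addr0 => [|w' /andP [w'S nww']].
  case: ifP => // /negbT not_ext.
  case: (eqVneq (V w) 0) => [->|nzw]; first by rewrite (herm0l hform) mul0r.
  have [/(theta_nz w wS nzw nzw) [_ sz ct]|/negPn/eqP ->] := boolP (theta q N t w w != 0).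
    by rewrite /extremal nzw sz ct !eqxx in not_ext.
  by rewrite mulr0.
case: (eqVneq (V w) 0) => [->|nzw]; first by rewrite (herm0l hform) mul0r.
case: (eqVneq (V w') 0) => [->|nzw']; first by rewrite (herm0r hform) mul0r.
have [/(theta_nz w' w'S nzw nzw') [ew' _ _]|/negPn/eqP ->] := boolP (theta q N t w w' != 0).
  by rewrite ew' eqxx in nww'.
by rewrite mulr0.
Qed.

Lemma theta_form_sum_sign : has extremal S -> 0 < (-1) ^+ t * theta_form_sum N t.
Proof.
move=> /hasP [w wS ew]; rewrite theta_form_sum_diag mulr_sumr (bigD1_seq w) //= ew.
have term_gt0 w' : extremal w' -> 0 < (-1) ^+ t * (form (V w') (V w') * theta q N t w' w').
  case/and3P=> nz /eqP sz /eqP ct.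
  by rewrite mulrCA mulr_gt0 ?(herm_gt0 hform) ?theta_diag_gt0.
rewrite ltr_wpDr ?term_gt0 // sumr_ge0 // => w' _.
by case: ifP => [/term_gt0 /ltW //|]; rewrite mulr0.
Qed.

End Extremal.

Lemma theta_form_sum_neq0 : has (fun w => V w != 0) S -> exists N t, theta_form_sum N t != 0.
Proof.
case/hasP=> w0 w0S nz0.
pose has_size n := has (fun w => (V w != 0) && (size w == n)) S.
have has_size0 : exists n, has_size n.
  by exists (size w0); apply/hasP; exists w0; rewrite ?nz0 ?eqxx.
have size_ub n : has_size n -> (n <= \max_(w <- S) size w)%N.
  by move=> /hasP [w wS /andP [_ /eqP <-]]; apply: (leq_bigmax_seq (P := xpredT)).
case: (ex_maxnP has_size0 size_ub) => N /hasP [w1 w1S /andP [nz1 /eqP sz1]] N_max.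
pose has_count n := has (extremal N n) S.
have has_count0 : exists n, has_count n.
  exists (count_mem o1 w1 + count_mem o2 w1)%N.
  by apply/hasP; exists w1; rewrite /extremal ?nz1 ?sz1 ?eqxx.
case: (ex_minnP has_count0) => t t_ext t_min.
exists N, t; apply: contraTneq (theta_form_sum_sign _ _ t_ext) => [->|w wS nz|w wS nz sz].
- by rewrite mulr0 ltxx.
- by apply: N_max; apply/hasP; exists w; rewrite ?nz ?eqxx.
- by apply: t_min; apply/hasP; exists w; rewrite /extremal ?nz ?sz ?eqxx.
Qed.

End ExtremalWords.

Section Pairing.
Variable R : realType.
Local Notation C := (R[i]).
Variable q : R.
Hypothesis hq : 0 < q.
Variable U : vectType C.
Variable form : U -> U -> C.
Hypothesis hform : hermitian_inner_product form.
Implicit Types (s : seq (U * xpoly R)).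

Definition contract (phi : U -> C) s : fpoly R :=
  flatten [seq scalep (phi t.1) (xembed q t.2) | t <- s].

Lemma tpair_contract s : ceq (tpair q form s)
  (flatten [seq mulp (dagger (xembed q a.2)) (contract (form a.1) s) | a <- s]).
Proof.
move=> w; rewrite /tpair coef_flatten big_allpairs_dep coef_flatten big_map.
apply: eq_bigr => a _; rewrite ceq_mul_flattenr coef_flatten !big_map.
by apply: eq_bigr => b _; rewrite ceq_mul_scalel ceq_mul_scaler !coef_scale.
Qed.

Lemma tensor_zero_tpair s : tensor_zero q s -> aeq q (tpair q form s) [::].
Proof.
move=> tz; apply/aeq0; apply: ideal_ceq (tpair_contract s) _.
apply: ideal_flatten => _ /mapP [a _ ->]; apply: ideal_mull.
exact/aeq0/(tz (herm_lfun hform a.1)).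
Qed.

Lemma act_tpair s f a b c d :
  act q (tpair q form s) f a b c d = \sum_(x <- s) \sum_(y <- s)
    form x.1 y.1 * act q (dagger (xembed q x.2)) (act q (xembed q y.2) f) a b c d.
Proof.
rewrite /tpair act_flatten big_allpairs_dep; apply: eq_bigr => x _; apply: eq_bigr => y _.
by rewrite act_mul act_scale.
Qed.

(* The action of (s, s) only sees these data of the summands of s. *)
Definition pairing_data (t : U * xpoly R) :=
  (t.1, act q (xembed q t.2), act q (dagger (xembed q t.2))).

Lemma act_tpair_data s s' : map pairing_data s = map pairing_data s' ->
  act q (tpair q form s) = act q (tpair q form s').
Proof.
move=> e; apply: functional_extensionality => f; apply: fun4_ext => a b c d.
have act_data s0 : act q (tpair q form s0) f a b c d = \sum_(x <- map pairing_data s0)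
    \sum_(y <- map pairing_data s0) form x.1.1 y.1.1 * x.2 (y.1.2 f) a b c d.
  by rewrite act_tpair big_map; apply: eq_bigr => x _; rewrite big_map.
by rewrite !act_data e.
Qed.

Lemma pbw_tensor s : exists s',
  [/\ forall t, t \in s' -> sorted_xpoly t.2, map pairing_data s = map pairing_data s' &
      forall phi : U -> C, aeq q (contract phi s) (contract phi s')].
Proof.
elim: s => [|[u P] s [s' [ss' ds' cs']]]; first by exists [::]; split => // phi; apply: aeq_refl.
have [P' [sP' eP']] := pbw_xembed (L := P) (fun t _ => pbw_xmon hq t.2).
exists ((u, P') :: s'); split.
- by move=> t /[1!inE] /orP [/eqP -> //| /ss'].
- by rewrite /= ds' /pairing_data /= (act_aeq hq eP') (act_dagger_aeq hq eP').
- by move=> phi; apply: aeq_cat; [apply: aeq_scale | apply: cs'].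
Qed.

Definition tensor_terms s : seq (U * seq 'I_4) :=
  flatten [seq [seq (x.1 *: t.1, x.2) | x <- t.2] | t <- s].

Definition tensor_support s := undup (map snd (tensor_terms s)).

Definition tensor_coef s (w : seq 'I_4) : U := \sum_(x <- tensor_terms s | x.2 == w) x.1.

Lemma sorted_tensor_support s : (forall t, t \in s -> sorted_xpoly t.2) ->
  forall w, w \in tensor_support s -> sorted ord_leq w.
Proof.
move=> ss w; rewrite mem_undup => /mapP [_ /flattenP [_ /mapP [t ts ->]] /mapP [x xt ->] ->].
exact: ss ts x xt.
Qed.

Lemma coef_contract (phi : {linear U -> C^o}) s w :
  coef (contract phi s) w = \sum_(x <- tensor_terms s) phi x.1 * coef (xmon q x.2) w.
Proof.
rewrite /contract /tensor_terms coef_flatten big_flatten !big_map; apply: eq_bigr => t _.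
rewrite coef_scale /xembed coef_flatten !big_map mulr_sumr; apply: eq_bigr => x _.
by rewrite coef_scale linearZ /= /GRing.scale /= mulrA [phi t.1 * _]mulrC.
Qed.

Lemma contract_eq0 s (phi : {linear U -> C^o}) :
  (forall w, w \in tensor_support s -> tensor_coef s w = 0) -> aeq q (contract phi s) [::].
Proof.
move=> h0; apply/aeq0; apply: ideal0 => g; rewrite coef_contract.
rewrite (@big_group_snd _ _ _ _ (tensor_support s) (fun u w => phi u * coef (xmon q w) g)).
- by rewrite big_seq big1 // => w /h0; rewrite /tensor_coef => ->; rewrite linear0 mul0r.
- by move=> w x y; rewrite linearD mulrDl.
- by move=> w; rewrite linear0 mul0r.
- exact: undup_uniq.
- by move=> w; rewrite mem_undup.
Qed.

Lemma act_xembed P (f : fun4 R) :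
  act q (xembed q P) f = fun a b c d => \sum_(y <- P) y.1 * act q (xmon q y.2) f a b c d.
Proof.
apply: fun4_ext => a b c d.
by rewrite /xembed act_flatten big_map; apply: eq_bigr => y _; rewrite act_scale.
Qed.

Lemma act_dagger_xembed P (f : fun4 R) a b c d :
  act q (dagger (xembed q P)) f a b c d =
  \sum_(x <- P) x.1^*%R * act q (dagger (xmon q x.2)) f a b c d.
Proof.
rewrite /xembed act_dagger_flatten big_map.
by apply: eq_bigr => x _; rewrite act_dagger_scale.
Qed.

Lemma act_lincomb_sum p (I : Type) (r : seq I) (k : I -> C) (F : I -> fun4 R) a b c d :
  act q p (fun a b c d => \sum_(i <- r) k i * F i a b c d) a b c d =
  \sum_(i <- r) k i * act q p (F i) a b c d.
Proof.
rewrite /act; under eq_bigr do rewrite act_word_sum mulr_sumr.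
rewrite exchange_big /=; apply: eq_bigr => i _; rewrite mulr_sumr.
by apply: eq_bigr => t _; rewrite mulrCA.
Qed.

Lemma act_tpair_terms s N t :
  act q (tpair q form s) (@delta_origin R) (N + N)%N%:Z 0 t%:Z t%:Z =
  \sum_(x <- tensor_terms s) \sum_(y <- tensor_terms s) form x.1 y.1 * theta q N t x.2 y.2.
Proof.
rewrite act_tpair /tensor_terms big_flatten big_map; apply: eq_bigr => a _.
rewrite big_map; under [RHS]eq_bigr => x _ do rewrite big_flatten big_map.
rewrite [RHS]exchange_big /=; apply: eq_bigr => b _.
rewrite act_dagger_xembed mulr_sumr; apply: eq_bigr => x _.
rewrite big_map act_xembed act_lincomb_sum !mulr_sumr; apply: eq_bigr => y _ /=.
by rewrite (hermZl hform) (hermZr hform) /theta act_mul; ring.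
Qed.

Lemma act_tpair_theta s N t :
  act q (tpair q form s) (@delta_origin R) (N + N)%N%:Z 0 t%:Z t%:Z =
  theta_form_sum q form (tensor_support s) (tensor_coef s) N t.
Proof.
have group_snd (F : U -> seq 'I_4 -> C) :
    (forall w, {morph F^~ w : x y / x + y}) -> (forall w, F 0 w = 0) ->
    \sum_(x <- tensor_terms s) F x.1 x.2 = \sum_(w <- tensor_support s) F (tensor_coef s w) w.
  by move=> FD F0; apply: big_group_snd => // [|w]; rewrite ?undup_uniq ?mem_undup.
rewrite act_tpair_terms /theta_form_sum.
pose F u w := \sum_(y <- tensor_terms s) form u y.1 * theta q N t w y.2.
rewrite (group_snd F) => [|w x y|w]; rewrite /F; last 2 first.
- by rewrite -big_split /=; apply: eq_bigr => z _; rewrite (hermDl hform) mulrDl.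
- by apply: big1 => z _; rewrite (herm0l hform) mul0r.
apply: eq_bigr => w _.
rewrite (group_snd (fun u w' => form (tensor_coef s w) u * theta q N t w w')) => // [w' x y|w'].
  by rewrite (hermDr hform) mulrDl.
by rewrite (herm0r hform) mul0r.
Qed.

End Pairing.
Theorem proposition3p4 (R : realType) (q : R) (hq : 0 < q)
    (U : vectType (R[i])) (form : U -> U -> R[i])
    (hform : hermitian_inner_product form)
    (sigma : seq (U * xpoly R)) :
  aeq q (tpair q form sigma) [::] <-> tensor_zero q sigma.
Proof.
split; last exact: tensor_zero_tpair.
move=> /aeq0 tpair0 phi.
have [s [sorted_s data_s contract_s]] := pbw_tensor hq sigma.
apply: aeq_trans (contract_s phi) (@contract_eq0 _ _ _ _ phi _) => w wS.
apply/eqP; apply: contraT => nz.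
have [|N [t]] := theta_form_sum_neq0 hq hform (V := tensor_coef s) (undup_uniq _)
  (sorted_tensor_support sorted_s).
  by apply/hasP; exists w.
rewrite -(act_tpair_theta q hform) -(act_tpair_data form data_s).
by rewrite (act_ideal hq _ tpair0) eqxx.
Qed.
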